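(* Let $\rho_{Q^n}$ be an arbitrary normalized state on $Q^{\otimes n}$. Let $\{P,I-P\}$ and $\{P',I-P'\}$ be two-outcome POVMs on $Q$ with $P\le P'$. Let $\boldsymbol N_P$ (resp. $\boldsymbol N_{P'}$) be the number of $P$-outcomes (resp. $P'$-outcomes) when each subsystem of $\rho_{Q^n}$ is measured with $\{P,I-P\}$ (resp. $\{P',I-P'\}$). Then for every $e$, $$\Pr\Big(\frac{\boldsymbol N_P}{n}\ge e\Big)\le\Pr\Big(\frac{\boldsymbol N_{P'}}{n}\ge e\Big).$$ *)

From mathcomp Require Import all_boot all_order all_algebra.
Set Implicit Arguments. Unset Strict Implicit. Unset Printing Implicit Defensive.
Import Order.TTheory GRing.Theory Num.Theory.
Local Open Scope ring_scope.

Section Quantum.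
Variable C : numClosedFieldType.

(* Operators on the Hilbert space C^T (T a finite basis) as kernels T -> T -> C *)
Definition op (T : finType) := T -> T -> C.

Definition psd (T : finType) (A : op T) : Prop :=
  (forall i j, A j i = (A i j)^*) /\
  (forall v : T -> C, 0 <= \sum_i \sum_j (v i)^* * A i j * v j).

Definition idop (T : finType) : op T := fun i j => (i == j)%:R.
Definition subop (T : finType) (A B : op T) : op T := fun i j => A i j - B i j.

Definition is_state (T : finType) (rho : op T) : Prop :=
  psd rho /\ \sum_i rho i i = 1.

Definition two_outcome_povm (T : finType) (P : op T) : Prop :=
  psd P /\ psd (subop (@idop T) P).

Definition loewner_le (T : finType) (P P' : op T) : Prop := psd (subop P' P).

(* basis of Q^{\otimes n}, with Q = C^d *)
Definition tens_idx (d n : nat) := {ffun 'I_n -> 'I_d}.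

Definition tensor (d n : nat) (M : 'I_n -> op 'I_d) : op (tens_idx d n) :=
  fun x y => \prod_(k < n) M k (x k) (y k).

Definition trace_mul (T : finType) (A B : op T) : C :=
  \sum_x \sum_y A x y * B y x.

(* measure each subsystem with {P, I - P}; outcome string b (true = P-outcome) *)
Definition outcome_prob (d n : nat) (rho : op (tens_idx d n)) (P : op 'I_d)
  (b : {ffun 'I_n -> bool}) : C :=
  trace_mul rho (tensor (fun k => if b k then P else subop (@idop ('I_d : finType)) P)).

Definition num_P (n : nat) (b : {ffun 'I_n -> bool}) : nat := #|[set k | b k]|.

Definition prob_frac_ge (d n : nat) (rho : op (tens_idx d n)) (P : op 'I_d)
  (e : C) : C :=
  \sum_(b : {ffun 'I_n -> bool} | e <= (num_P b)%:R / n%:R) outcome_prob rho P b.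

End Quantum.

From mathcomp Require Import all_boot all_order all_algebra ring.
Set Implicit Arguments. Unset Strict Implicit. Unset Printing Implicit Defensive.
Import Order.TTheory GRing.Theory Num.Theory.
Local Open Scope ring_scope.

(* Hybrid argument: replace P by P' one subsystem at a time.  At a single site
   j, pair each outcome string having a P-outcome at j with the string obtained
   by flipping that outcome.  Since {N/n >= e} is upward closed, the pair either
   contributes nothing to the change in probability or contributes
   tr(rho ((P' - P) ⊗ R)), where R is a tensor product of POVM elements.  That
   trace is nonnegative: expanding every factor in its spectral decomposition
   writes (P' - P) ⊗ R as a nonnegative combination of operators v v^*. *)

Section GramSum.
Variable C : numClosedFieldType.

Definition gram_sum (T I : finType) (c : I -> C) (v : I -> T -> C) : op C T :=
  fun x y => \sum_i c i * v i x * (v i y)^*.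

Lemma eq_trace_mul (T : finType) (rho B B' : op C T) :
  (forall x y, B x y = B' x y) -> trace_mul rho B = trace_mul rho B'.
Proof.
by move=> eqB; apply: eq_bigr => x _; apply: eq_bigr => y _; rewrite eqB.
Qed.

Lemma trace_mul_gram_sum_ge0 (T I : finType) (rho : op C T) (c : I -> C)
    (v : I -> T -> C) :
  psd rho -> (forall i, 0 <= c i) -> 0 <= trace_mul rho (gram_sum c v).
Proof.
case=> _ rho_ge0 c_ge0.
have -> : trace_mul rho (gram_sum c v) =
    \sum_i c i * \sum_x \sum_y (v i x)^* * rho x y * v i y.
  transitivity (\sum_x \sum_y \sum_i c i * ((v i x)^* * rho x y * v i y)).
    apply: eq_bigr => x _; apply: eq_bigr => y _; rewrite big_distrr.
    by apply: eq_bigr => i _ /=; ring.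
  under eq_bigr do rewrite exchange_big.
  rewrite exchange_big; apply: eq_bigr => i _; rewrite big_distrr.
  by apply: eq_bigr => x _; rewrite big_distrr.
by apply: sumr_ge0 => i _; apply: mulr_ge0.
Qed.

Lemma tensor_gram_sum (d n : nat) (I : finType) (c : 'I_n -> I -> C)
    (v : 'I_n -> I -> 'I_d -> C) (x y : tens_idx d n) :
  tensor (fun k => gram_sum (c k) (v k)) x y =
  gram_sum (fun f : {ffun 'I_n -> I} => \prod_k c k (f k))
           (fun f (z : tens_idx d n) => \prod_k v k (f k) (z k)) x y.
Proof.
rewrite /tensor /gram_sum bigA_distr_bigA; apply: eq_bigr => f _.
by rewrite rmorph_prod -!big_split.
Qed.

End GramSum.

Section Spectral.
Variables (C : numClosedFieldType) (d : nat).
Local Open Scope sesquilinear_scope.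

Definition kernel_mx (A : op C 'I_d) : 'M[C]_d := \matrix_(i, j) A i j.
Definition spectral_value (A : op C 'I_d) (i : 'I_d) : C :=
  spectral_diag (kernel_mx A) 0 i.
Definition spectral_vector (A : op C 'I_d) (i x : 'I_d) : C :=
  (spectralmx (kernel_mx A) i x)^*.

Variable A : op C 'I_d.
Hypothesis psdA : psd A.
Local Notation U := (spectralmx (kernel_mx A)).

Lemma psd_kernel_hermsymmx : kernel_mx A \is hermsymmx.
Proof.
case: psdA => A_herm _; apply/is_hermitianmxP; rewrite expr0 scale1r.
by apply/matrixP=> i j; rewrite !mxE A_herm.
Qed.

Lemma psd_kernel_spectral :
  kernel_mx A = U^t* *m diag_mx (spectral_diag (kernel_mx A)) *m U.
Proof.
have /hermitian_normalmx/orthomx_spectralP {1}-> := psd_kernel_hermsymmx.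
by rewrite invmx_unitary ?spectral_unitarymx.
Qed.

Lemma psd_gram_sum x y :
  A x y = gram_sum (spectral_value A) (spectral_vector A) x y.
Proof.
have /matrixP/(_ x y) := psd_kernel_spectral; rewrite !mxE => ->.
apply: eq_bigr => i _; rewrite !mxE (bigD1 i) //= big1 ?addr0; last first.
  by move=> k /negbTE ki; rewrite !mxE ki mulr0n mulr0 ?mul0r.
rewrite !mxE eqxx mulr1n /spectral_vector conjCK.
by rewrite [_ * spectral_value _ _]mulrC.
Qed.

Lemma spectral_value_ge0 i : 0 <= spectral_value A i.
Proof.
have U_unitary := spectral_unitarymx (kernel_mx A).
have : U *m kernel_mx A *m U^t* = diag_mx (spectral_diag (kernel_mx A)).
  rewrite [X in U *m X *m _]psd_kernel_spectral !mulmxA.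
  by rewrite (unitarymxP U_unitary) mul1mx -mulmxA (unitarymxP U_unitary)
    mulmx1.
rewrite /spectral_value => /matrixP/(_ i i); rewrite [RHS]mxE eqxx mulr1n => <-.
case: psdA => _ /(_ (spectral_vector A i)); congr (_ <= _).
rewrite mxE exchange_big; apply: eq_bigr => y _; rewrite !mxE big_distrl.
by apply: eq_bigr => x _; rewrite !mxE conjCK.
Qed.

End Spectral.

Lemma trace_mul_tensor_ge0 (C : numClosedFieldType) (d n : nat)
    (rho : op C (tens_idx d n)) (A : 'I_n -> op C 'I_d) :
  psd rho -> (forall k, psd (A k)) -> 0 <= trace_mul rho (tensor A).
Proof.
move=> psd_rho psdA.
pose c k := spectral_value (A k); pose v k := spectral_vector (A k).
have gramE x y : tensor A x y = tensor (fun k => gram_sum (c k) (v k)) x y.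
  by apply: eq_bigr => k _; rewrite psd_gram_sum.
rewrite (eq_trace_mul _ gramE) (eq_trace_mul _ (tensor_gram_sum c v)).
apply: trace_mul_gram_sum_ge0 => // f.
by apply: prodr_ge0 => k _; apply: spectral_value_ge0.
Qed.

Definition flip_at (n : nat) (j : 'I_n) (b : {ffun 'I_n -> bool}) :
  {ffun 'I_n -> bool} := [ffun k => if k == j then ~~ b k else b k].

Lemma flip_atK n (j : 'I_n) : involutive (flip_at j).
Proof.
by move=> b; apply/ffunP => k; rewrite !ffunE; case: eqP => // _; rewrite negbK.
Qed.

Lemma sum_flip_pairs (V : nmodType) n (j : 'I_n)
    (F : {ffun 'I_n -> bool} -> V) :
  \sum_b F b = \sum_(b : {ffun 'I_n -> bool} | b j) (F b + F (flip_at j b)).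
Proof.
rewrite (bigID (fun b : {ffun 'I_n -> bool} => b j)) /= big_split /=.
congr (_ + _).
rewrite (reindex_inj (can_inj (flip_atK j))) /=.
by apply: eq_bigl => b; rewrite ffunE eqxx negbK.
Qed.

Definition upward_closed n (U : pred {ffun 'I_n -> bool}) : Prop :=
  forall b b' : {ffun 'I_n -> bool}, (forall k, b k ==> b' k) -> U b -> U b'.

Section Hybrid.
Variables (C : numClosedFieldType) (d n : nat) (rho : op C (tens_idx d n)).
Hypothesis psd_rho : psd rho.
Local Notation I := (@idop C ('I_d : finType)).

Definition site_outcome_prob (M : 'I_n -> op C 'I_d)
    (b : {ffun 'I_n -> bool}) : C :=
  trace_mul rho (tensor (fun k => if b k then M k else subop I (M k))).

Definition event_prob (M : 'I_n -> op C 'I_d)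
    (U : pred {ffun 'I_n -> bool}) : C :=
  \sum_(b | U b) site_outcome_prob M b.

Definition trace_at (R : 'I_n -> op C 'I_d) (j : 'I_n) (X : op C 'I_d) : C :=
  trace_mul rho (tensor (fun k => if k == j then X else R k)).

Lemma eq_trace_mul_tensor (A B : 'I_n -> op C 'I_d) :
  (forall k, A k = B k) -> trace_mul rho (tensor A) = trace_mul rho (tensor B).
Proof.
by move=> eqAB; apply: eq_trace_mul => x y; apply: eq_bigr => k _; rewrite eqAB.
Qed.

Lemma eq_event_prob (M M' : 'I_n -> op C 'I_d) U :
  (forall k, M k = M' k) -> event_prob M U = event_prob M' U.
Proof.
move=> eqM; apply: eq_bigr => b _.
by apply: eq_trace_mul_tensor => k; rewrite eqM.
Qed.

Lemma trace_atB R j X Y :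
  trace_at R j (subop X Y) = trace_at R j X - trace_at R j Y.
Proof.
rewrite /trace_at /trace_mul -sumrB; apply: eq_bigr => x _.
rewrite -sumrB; apply: eq_bigr => y _.
have tensor_at Z : tensor (fun k => if k == j then Z else R k) y x
    = Z (y j) (x j) * \prod_(k | k != j) R k (y k) (x k).
  rewrite /tensor (bigD1 j) //= eqxx; congr (_ * _).
  by apply: eq_bigr => k /negbTE ->.
by rewrite !tensor_at /subop; ring.
Qed.

Lemma trace_at_le R j X Y : (forall k, psd (R k)) -> loewner_le X Y ->
  trace_at R j X <= trace_at R j Y.
Proof.
move=> psdR le_XY; rewrite -subr_ge0 -trace_atB.
by apply: trace_mul_tensor_ge0 => // k; case: eqP.
Qed.

Lemma event_prob_le_at U (M M' : 'I_n -> op C 'I_d) (j : 'I_n) :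
  upward_closed U -> (forall k, two_outcome_povm (M k)) ->
  (forall k, k != j -> M' k = M k) -> loewner_le (M j) (M' j) ->
  event_prob M U <= event_prob M' U.
Proof.
move=> U_up povmM eqM' le_j.
rewrite /event_prob big_mkcond (sum_flip_pairs j) [X in _ <= X]big_mkcond.
rewrite [X in _ <= X](sum_flip_pairs j) /=; apply: ler_sum => b bj.
pose R k := if b k then M k else subop I (M k).
have site_probE N : (forall k, k != j -> N k = M k) ->
    site_outcome_prob N b = trace_at R j (N j) /\
    site_outcome_prob N (flip_at j b) = trace_at R j I - trace_at R j (N j).
  move=> eqN; rewrite -trace_atB; split; apply: eq_trace_mul_tensor => k;
    by rewrite ?ffunE; case: (eqVneq k j) => [->|kj]; rewrite ?bj // /R eqN.
have [pM pMf] := site_probE M (fun _ _ => erefl).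
have [pM' pM'f] := site_probE M' eqM'.
have flip_le k : flip_at j b k ==> b k.
  by rewrite ffunE; case: eqP => [->|]; rewrite ?bj ?implybT ?implybb.
case Ub: (U b); last first.
  by rewrite (contraFF (U_up _ _ flip_le) Ub).
rewrite pM pM' pMf pM'f; case: (U (flip_at j b)).
  by rewrite !subrKC.
rewrite !addr0; apply: trace_at_le => // k.
by case: (povmM k) => ? ?; rewrite /R; case: (b k).
Qed.

Lemma event_prob_mono U (M M' : 'I_n -> op C 'I_d) :
  upward_closed U ->
  (forall k, two_outcome_povm (M k)) -> (forall k, two_outcome_povm (M' k)) ->
  (forall k, loewner_le (M k) (M' k)) ->
  event_prob M U <= event_prob M' U.
Proof.
move=> U_up povmM povmM' leM.
pose hybrid m (k : 'I_n) := if (k < m)%N then M' k else M k.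
have -> : event_prob M U = event_prob (hybrid 0%N) U.
  by apply: eq_event_prob => k; rewrite /hybrid ltn0.
have -> : event_prob M' U = event_prob (hybrid n) U.
  by apply: eq_event_prob => k; rewrite /hybrid ltn_ord.
suff : forall m, (m <= n)%N ->
    event_prob (hybrid 0%N) U <= event_prob (hybrid m) U by apply.
elim=> [//|m IHm] lt_mn; apply: le_trans (IHm (ltnW lt_mn)) _.
apply: (event_prob_le_at (j := Ordinal lt_mn)) => //.
- by move=> k; rewrite /hybrid; case: ifP.
- move=> k neq_kj; rewrite /hybrid ltnS leq_eqVlt.
  by have /negbTE -> : val k != m := neq_kj.
- by rewrite /hybrid /= ltnSn ltnn.
Qed.

End Hybrid.

Lemma upward_closed_frac_ge (C : numFieldType) n (e : C) :
  upward_closed (fun b : {ffun 'I_n -> bool} => e <= (num_P b)%:R / n%:R).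
Proof.
move=> b b' le_bb' /le_trans; apply.
apply: ler_wpM2r; first by rewrite invr_ge0.
rewrite ler_nat; apply/subset_leq_card/subsetP => k.
by rewrite !inE; apply/implyP.
Qed.

Theorem lemma8 (C : numClosedFieldType) (d n : nat)
  (rho : op C (tens_idx d n)) (P P' : op C 'I_d) (e : C) :
  is_state rho ->
  two_outcome_povm P -> two_outcome_povm P' ->
  loewner_le P P' ->
  e \is Num.real ->
  prob_frac_ge rho P e <= prob_frac_ge rho P' e.
Proof.
move=> [psd_rho _] povmP povmP' le_PP' _.
exact: (event_prob_mono psd_rho (upward_closed_frac_ge (e := e))).
Qed.
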